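(* Let $\mathcal{Y}$ be a finite set, let $\mathbb{P}_t$, $p_t$, $q_t$ be probability distributions on $\mathcal{Y}$, let $z \in \mathcal{Y}$ with $p_t(z) > 0$, and let $\alpha, \eta \in \mathbb{R}$. Let $\ell$ be the 0-1 loss $\ell(y, p) = \mathbb{I}\{y \neq \arg\max_{y'} p(y')\}$ (with a fixed tie-breaking rule for the argmax). For $r \in \{0,1\}$ define $$L(r) = \mathbb{E}_{y \sim \mathbb{P}_t}\Big[ r \cdot \big(\ell(y, p_t) + \alpha \cdot D_{\mathrm{TV}}(p_t, q_t)\big) + (1 - r) \cdot \Big(\ell(y, q_t) + \eta \cdot \frac{q_t(z)}{p_t(z)}\Big)\Big].$$ Define $\hat r \in \{0,1\}$ by $\hat r = 1$ if and only if $$\max_{y} q_t(y) < \max_{y} p_t(y) - \alpha \cdot D_{\mathrm{TV}}(p_t, q_t) + \eta \cdot \frac{q_t(z)}{p_t(z)}.$$ Then $$L(\hat r) - \min_{r \in \{0,1\}} L(r) \le \max_{y \in \mathcal{Y}} |\mathbb{P}_t(y) - q_t(y)| + \max_{y \in \mathcal{Y}} |\mathbb{P}_t(y) - p_t(y)|.$$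
   Context: $D_{\mathrm{TV}}(p,q) = \frac{1}{2}\sum_{y \in \mathcal{Y}} |p(y) - q(y)|$ is the total variation distance. Interpretation (not needed formally): $\mathcal{Y}$ is a token vocabulary, $q_t$ and $p_t$ are the next-token distributions of a draft model and a reference (verifier) model given a fixed prefix $x_{<t}$ and retrieved chunk $z$, $\mathbb{P}_t$ is the true next-token distribution, $r$ is the rejection decision, and $\hat r$ is the plug-in confidence-based rejection rule. *)

From mathcomp Require Import all_boot all_order all_algebra.
Set Implicit Arguments. Unset Strict Implicit. Unset Printing Implicit Defensive.
Import Order.TTheory GRing.Theory Num.Theory.
Local Open Scope ring_scope.

Definition is_distr (R : realFieldType) (Y : finType) (p : Y -> R) : Prop :=
  (forall y, 0 <= p y) /\ \sum_(y : Y) p y = 1.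

Definition dTV (R : realFieldType) (Y : finType) (p q : Y -> R) : R :=
  2^-1 * \sum_(y : Y) `|p y - q y|.

(* Maximum of a nonnegative function over Y (0 for empty Y). *)
Definition fmax (R : realFieldType) (Y : finType) (f : Y -> R) : R :=
  \big[Num.max/0]_(y : Y) f y.

(* An argmax selector (= argmax with some fixed tie-breaking rule). *)
Definition is_argmax_sel (R : realFieldType) (Y : finType)
  (am : (Y -> R) -> Y) : Prop := forall (f : Y -> R) (y : Y), f y <= f (am f).

Definition loss01 (R : realFieldType) (Y : finType) (am : (Y -> R) -> Y)
  (y : Y) (p : Y -> R) : R := if y != am p then 1 else 0.

Definition Lrisk (R : realFieldType) (Y : finType) (am : (Y -> R) -> Y)
  (P p q : Y -> R) (z : Y) (alpha eta : R) (r : bool) : R :=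
  \sum_(y : Y) P y *
    ((r%:R) * (loss01 am y p + alpha * dTV p q)
     + (1 - r%:R) * (loss01 am y q + eta * (q z / p z))).

Definition rhat (R : realFieldType) (Y : finType)
  (p q : Y -> R) (z : Y) (alpha eta : R) : bool :=
  fmax q < fmax p - alpha * dTV p q + eta * (q z / p z).

(* The risk of accepting the draft is 1 - P(argmax q) + eta q(z)/p(z) and that of
   rejecting it is 1 - P(argmax p) + alpha D_TV(p, q).  The plug-in rule compares
   the same two quantities with the unknown P replaced by q and p respectively;
   since max q = q(argmax q) and max p = p(argmax p), each plug-in risk is off by
   |P - q| resp. |P - p| at a single point, and choosing the smaller of two
   estimates costs at most the sum of the two estimation errors. *)
From mathcomp Require Import all_boot all_order all_algebra.
From mathcomp Require Import ring lra.
Import Order.TTheory GRing.Theory Num.Theory.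
Local Open Scope ring_scope.
Set Implicit Arguments.
Unset Strict Implicit.

Lemma argmin_plugin_regret (R : realDomainType) (a b a' b' ea eb : R) :
  `|a - a'| <= ea -> `|b - b'| <= eb ->
  (if a' < b' then a else b) - Num.min a b <= ea + eb.
Proof.
move=> /ler_normlP[ha ha'] /ler_normlP[hb hb'].
by rewrite minElt; case: (ltP a' b') => ?; case: (ltP a b) => ?; lra.
Qed.

Section FiniteRisk.

Variables (R : realFieldType) (Y : finType).
Implicit Types (f P p q : Y -> R) (am : (Y -> R) -> Y).

Lemma fmax_ge f y : f y <= fmax f.
Proof. by rewrite /fmax (bigD1 y) //= le_max lexx. Qed.

Lemma fmax_argmax am f :
  is_argmax_sel am -> (forall y, 0 <= f y) -> fmax f = f (am f).
Proof.
move=> Ham f_ge0; apply/eqP; rewrite eq_le fmax_ge andbT /fmax.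
apply: (big_ind (fun v => v <= f (am f))) => //.
by move=> u v hu hv; rewrite ge_max hu hv.
Qed.

Lemma expected_loss01 am P p k : \sum_y P y = 1 ->
  \sum_y P y * (loss01 am y p + k) = 1 - P (am p) + k.
Proof.
move=> P1; under eq_bigr => y _ do rewrite mulrDr.
rewrite big_split /= -big_distrl /= P1 mul1r; congr (_ + _).
rewrite -[in RHS]P1 (bigD1 (am p)) //= [in RHS](bigD1 (am p)) //=.
rewrite [in RHS]addrAC subrr add0r.
rewrite /loss01 eqxx mulr0 add0r.
by apply: eq_bigr => y ->; rewrite mulr1.
Qed.

Lemma LriskE am P p q z alpha eta r : \sum_y P y = 1 ->
  Lrisk am P p q z alpha eta r =
  if r then 1 - P (am p) + alpha * dTV p q
  else 1 - P (am q) + eta * (q z / p z).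
Proof.
move=> P1; case: r; rewrite /Lrisk -(expected_loss01 am _ _ P1);
  by apply: eq_bigr => y _ /=; ring.
Qed.

Lemma rhatE p q z alpha eta : rhat p q z alpha eta =
  (1 - fmax p + alpha * dTV p q < 1 - fmax q + eta * (q z / p z)).
Proof. by rewrite /rhat; apply/idP/idP => ?; lra. Qed.

Lemma plugin_risk_error P p k y :
  `|(1 - P y + k) - (1 - p y + k)| <= fmax (fun x => `|P x - p x|).
Proof.
have -> : (1 - P y + k) - (1 - p y + k) = p y - P y by ring.
by rewrite distrC; apply: (fmax_ge (fun x => `|P x - p x|)).
Qed.

End FiniteRisk.

Theorem lemma2 (R : realFieldType) (Y : finType) (am : (Y -> R) -> Y)
  (Pt pt qt : Y -> R) (z : Y) (alpha eta : R) :
  is_argmax_sel am ->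
  is_distr Pt -> is_distr pt -> is_distr qt ->
  0 < pt z ->
  Lrisk am Pt pt qt z alpha eta (rhat pt qt z alpha eta)
    - Num.min (Lrisk am Pt pt qt z alpha eta false)
              (Lrisk am Pt pt qt z alpha eta true)
  <= fmax (fun y => `|Pt y - qt y|) + fmax (fun y => `|Pt y - pt y|).
Proof.
move=> Ham [_ Pt1] [pt_ge0 _] [qt_ge0 _] _.
rewrite !LriskE // rhatE (fmax_argmax Ham pt_ge0) (fmax_argmax Ham qt_ge0).
rewrite minC [leRHS]addrC.
by apply: argmin_plugin_regret; apply: plugin_risk_error.
Qed.
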